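(* Let $S$ be an invariant star in $\mathbb{R}^N$ with internal vertex $0$, external vertices $\vec v_1,\dots,\vec v_n$ and invariant constant $\gamma$. Suppose the centre of mass $\frac1n\sum_\ell\vec v_\ell$ is non-zero, let $b>0$ be its distance from the origin and $\vec e=\sum_\ell\vec v_\ell/\|\sum_\ell\vec v_\ell\|$. For any real $x\ne-nb$, the star with internal vertex $0$ and the $n+1$ external vertices $\vec v_1,\dots,\vec v_n,x\vec e$ is invariant, with invariant constant $$\tilde\gamma=\frac{(n+1)(x^2+nb^2\gamma)}{(x+nb)^2}.$$
   Context: Let $P:\mathbb{R}^N\to\mathbb{C}$, $P(y_1,\dots,y_N)=y_1+iy_2$. A star in $\mathbb{R}^N$ with internal vertex $0$ and external vertices $\vec x_1,\dots,\vec x_m$ is invariant, with invariant constant $\gamma\in\mathbb{R}$, if for every orthogonal transformation $A$ of $\mathbb{R}^N$, setting $z_\ell=P(A\vec x_\ell)$, one has $\frac{\gamma}{m}\big(\sum_\ell z_\ell\big)^2=\sum_\ell z_\ell^2$. *)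

From HB Require Import structures.
From mathcomp Require Import all_boot all_order all_algebra.
Set Implicit Arguments. Unset Strict Implicit. Unset Printing Implicit Defensive.
Import Order.TTheory GRing.Theory Num.Theory.
Local Open Scope ring_scope.

(* k-th coordinate (0-based) of a column vector of R^N; 0 if out of range. *)
Definition coord (R : ringType) (N : nat) (v : 'cV[R]_N) (k : nat) : R :=
  match @insub nat (fun i => i < N)%N 'I_N k with Some i => v i 0 | None => 0 end.

(* Complex numbers represented as pairs (real part, imaginary part). *)
Definition cadd (R : ringType) (z w : R * R) : R * R := (z.1 + w.1, z.2 + w.2).
Definition cmul (R : ringType) (z w : R * R) : R * R :=
  (z.1 * w.1 - z.2 * w.2, z.1 * w.2 + z.2 * w.1).
Definition csq (R : ringType) (z : R * R) : R * R := cmul z z.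
Definition cscale (R : ringType) (a : R) (z : R * R) : R * R := (a * z.1, a * z.2).
Definition csum (R : ringType) (s : seq (R * R)) : R * R := foldr (@cadd R) (0, 0) s.

Definition Pproj (R : ringType) (N : nat) (y : 'cV[R]_N) : R * R :=
  (coord y 0, coord y 1).

Definition orthogonal (R : ringType) (N : nat) (A : 'M[R]_N) : Prop :=
  A^T *m A = 1%:M.

(* A star with internal vertex 0 and external vertices the list xs is invariant
   with invariant constant gamma. *)
Definition invariant_star (R : fieldType) (N : nat) (xs : seq 'cV[R]_N) (gamma : R)
  : Prop :=
  forall A : 'M[R]_N, orthogonal A ->
    let zs := [seq Pproj (A *m x) | x <- xs] in
    cscale (gamma / (size xs)%:R) (csq (csum zs)) = csum [seq csq z | z <- zs].

Definition vnorm (R : rcfType) (N : nat) (v : 'cV[R]_N) : R :=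
  Num.sqrt (\sum_(i < N) v i 0 ^+ 2).

From Pilot Require Import Defs.
From HB Require Import structures.
From mathcomp Require Import all_boot all_order all_algebra.
From mathcomp Require Import ring.
Import Order.TTheory GRing.Theory Num.Theory.
Local Open Scope ring_scope.

(* For an orthogonal A write Z = P(A s), where s is the sum of
   the external vertices, and Q for the sum of the squares P(A v)^2.  Since P
   and A are linear, the new vertex x e = t s with t = x / |s| projects to
   t Z, so the enlarged star has vertex sum (1 + t) Z and sum of squares
   Q + t^2 Z^2.  Invariance of the original star gives Q = (gamma/n) Z^2, so
   the enlarged star is invariant with any constant gamma' satisfying
   gamma'/(n+1) (1 + t)^2 = gamma/n + t^2.
   The file first shows that coordinates, hence P, are linear and that the
   vertex sum commutes with P o A; it then proves the general statement
   invariant_star_rcons_scaled_sum about appending any multiple of the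
   vertex sum, and finally derives the theorem by checking, with |s| = n b != 0,
   that the announced constant satisfies the relation above. *)

Lemma coord0 (R : nzRingType) (N : nat) (k : nat) : Defs.coord (0 : 'cV[R]_N) k = 0.
Proof. by rewrite /Defs.coord; case: insub => [i|] /=; rewrite ?mxE. Qed.

Lemma coordD (R : nzRingType) (N : nat) (u v : 'cV[R]_N) (k : nat) :
  Defs.coord (u + v) k = Defs.coord u k + Defs.coord v k.
Proof. by rewrite /Defs.coord; case: insub => [i|] /=; rewrite ?mxE ?addr0. Qed.

Lemma coordZ (R : nzRingType) (N : nat) (c : R) (v : 'cV[R]_N) (k : nat) :
  Defs.coord (c *: v) k = c * Defs.coord v k.
Proof. by rewrite /Defs.coord; case: insub => [i|] /=; rewrite ?mxE ?mulr0. Qed.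

Lemma csum_Pproj (R : nzRingType) (N : nat) (A : 'M[R]_N) (vs : seq 'cV[R]_N) :
  csum [seq Pproj (A *m v) | v <- vs] = Pproj (A *m \sum_(v <- vs) v).
Proof.
elim: vs => [|v vs IH] /=; first by rewrite big_nil mulmx0 /Pproj !coord0.
by rewrite big_cons mulmxDr IH /cadd /Pproj !coordD.
Qed.

Lemma Pproj_scale (R : comNzRingType) (N : nat) (A : 'M[R]_N) (c : R) (v : 'cV[R]_N) :
  Pproj (A *m (c *: v)) = cscale c (Pproj (A *m v)).
Proof. by rewrite -scalemxAr /Pproj !coordZ. Qed.

Lemma csum_rcons (R : nzRingType) (s : seq (R * R)) (z : R * R) :
  csum (rcons s z) = cadd (csum s) z.
Proof.
elim: s => [|w s IH] /=; first by case: z => a b; rewrite /cadd /= !add0r !addr0.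
by rewrite IH /cadd /= !addrA.
Qed.

Lemma invariant_star_rcons_scaled_sum (R : fieldType) (N : nat)
    (vs : seq 'cV[R]_N) (gamma gamma' t : R) :
  invariant_star vs gamma ->
  gamma' / (size vs).+1%:R * (1 + t) ^+ 2 = gamma / (size vs)%:R + t ^+ 2 ->
  invariant_star (rcons vs (t *: \sum_(v <- vs) v)) gamma'.
Proof.
move=> hinv hconst A hA /=.
have := hinv A hA => /=.
rewrite !map_rcons !csum_rcons csum_Pproj Pproj_scale size_rcons.
case: (Pproj _) => z1 z2; case: (csum _) => q1 q2.
rewrite /cscale /csq /cmul /cadd /= => -[<- <-].
set c := gamma' / _ in hconst *; set d := gamma / _ in hconst *.
congr (_, _).
- by transitivity (c * (1 + t) ^+ 2 * (z1 * z1 - z2 * z2)); [ring | rewrite hconst; ring].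
- by transitivity (c * (1 + t) ^+ 2 * (z1 * z2 + z2 * z1)); [ring | rewrite hconst; ring].
Qed.

Lemma vnorm_eq0 (R : rcfType) (N : nat) (v : 'cV[R]_N) : (vnorm v == 0) = (v == 0).
Proof.
apply/idP/eqP => [|->]; last first.
  by rewrite /vnorm big1 ?sqrtr0 // => i _; rewrite mxE expr0n.
rewrite /vnorm sqrtr_eq0 => hle.
have sq_ge0 (i : 'I_N) : true -> 0 <= v i 0 ^+ 2 by move=> _; exact: sqr_ge0.
have hsum0 : \sum_(i < N) v i 0 ^+ 2 = 0 by apply/eqP; rewrite eq_le hle sumr_ge0.
apply/matrixP => i j; rewrite ord1 mxE.
by apply/eqP; rewrite -sqrf_eq0; apply/eqP/(psumr_eq0P sq_ge0 hsum0).
Qed.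

Theorem lemmaA1 (R : rcfType) (N : nat) (hN : (2 <= N)%N)
  (vs : seq 'cV[R]_N) (gamma : R)
  (hinv : invariant_star vs gamma)
  (hsum : \sum_(v <- vs) v != 0)
  (x : R)
  (hx : x != - ((size vs)%:R * (vnorm (\sum_(v <- vs) v) / (size vs)%:R))) :
  let n := size vs in
  let b := vnorm (\sum_(v <- vs) v) / n%:R in
  let e := (vnorm (\sum_(v <- vs) v))^-1 *: \sum_(v <- vs) v in
  invariant_star (rcons vs (x *: e))
    ((n.+1)%:R * (x ^+ 2 + n%:R * b ^+ 2 * gamma) / (x + n%:R * b) ^+ 2).
Proof.
move=> n b e.
set s := \sum_(v <- vs) v in hsum hx b e *.
set m := vnorm s in hx b e *.
rewrite -/n -/b in hx.
have n_neq0 : n%:R != 0 :> R.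
  rewrite pnatr_eq0 size_eq0; apply: contraNneq hsum => vs_nil.
  by rewrite /s vs_nil big_nil.
have n1_neq0 : n.+1%:R != 0 :> R by rewrite pnatr_eq0.
have m_neq0 : m != 0 by rewrite vnorm_eq0.
have nb_m : n%:R * b = m by rewrite /b mulrCA divff // mulr1.
have xm_neq0 : x + m != 0 by rewrite addr_eq0 -nb_m.
have -> : x *: e = (x / m) *: s by rewrite /e scalerA.
apply: (@invariant_star_rcons_scaled_sum R N vs gamma _ (x / m) hinv).
rewrite -/n nb_m /b.
by field; rewrite m_neq0 n_neq0 xm_neq0 addrC natr1 n1_neq0.
Qed.
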